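(* Let $p\geq 3$ be a prime, $u\in\{1,\ldots,p-1\}$ and $s\geq 2$ an integer. For an integer $n\geq p^{s+1}$ with base-$p$ expansion $n=\sum_{i=0}^{v}\varepsilon_i p^{i}$ ($\varepsilon_i\in\{0,\ldots,p-1\}$), let $t(n)>s$ be the least index $t>s$ with $\varepsilon_t\neq 0$. Then among those $n\geq p^{s+1}$ with $\nu_{p}\big(A_{p,(p-1)(up^s-1)}(n)\big)\in\{1,2\}$, the value $\nu_{p}\big(A_{p,(p-1)(up^s-1)}(n)\big)$ depends only on the digit $\varepsilon_s$ and the digit $\varepsilon_{t(n)}$; that is, if $n,n'\geq p^{s+1}$ both have valuation in $\{1,2\}$, the same digit in position $s$, and the same first nonzero digit in a position greater than $s$, then $\nu_{p}\big(A_{p,(p-1)(up^s-1)}(n)\big)=\nu_{p}\big(A_{p,(p-1)(up^s-1)}(n')\big)$.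
   Context: For an integer $m\geq 2$ and a positive integer $k$, the integers $A_{m,k}(n)$, $n\in\mathbb{N}=\{0,1,2,\ldots\}$, are defined by the formal power series identity $\prod_{i=0}^{\infty}\big(1-x^{m^{i}}\big)^{-k}=\sum_{n=0}^{\infty}A_{m,k}(n)x^{n}$. For a prime $p$, $\nu_p(n)$ denotes the $p$-adic valuation of the integer $n$, with $\nu_p(0)=+\infty$. *)

From mathcomp Require Import all_boot all_order all_algebra.
Set Implicit Arguments. Unset Strict Implicit. Unset Printing Implicit Defensive.
Import GRing.Theory.
Local Open Scope ring_scope.

(* Truncation of the formal power series (1 - y)^{-k} = \sum_j C(j+k-1, k-1) y^j
   with y = x^(m^i), keeping the terms j <= n. *)
Definition geom_trunc (m k n i : nat) : {poly int} :=
  \sum_(j < n.+1) ('C(j + k - 1, k - 1))%:R *: 'X^(j * m ^ i).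

(* A_{m,k}(n) = coefficient of x^n in \prod_{i>=0} (1 - x^{m^i})^{-k}.
   Factors with i > n (m^i > n since m >= 2) and terms of degree > n do not
   affect the coefficient of x^n, so the finite truncation computes it exactly. *)
Definition A (m k n : nat) : int :=
  (\prod_(i < n.+1) geom_trunc m k n i)`_n.

(* p-adic valuation of an integer (logn p 0 = 0) *)
Definition nu (p : nat) (a : int) : nat := logn p `|a|%N.

Definition digit (p i n : nat) : nat := (n %/ p ^ i %% p)%N.

Definition is_tn (p s n t : nat) : Prop :=
  [/\ (s < t)%N, digit p t n != 0%N & forall j, (s < j < t)%N -> digit p j n = 0%N].

(* Write Q_K = prod_(i < K) (1 - X^(p^i))^(p-1), m = u p^s and k = (p-1)(m-1), so that
   prod_i (1 - X^(p^i))^(-k) = (1 - X)^m Q * ((1 - X) Q)^(-m).  Since (1 - X) Q_K is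
   1 - X^(p^K) modulo p, and p | m, the last factor is 1 modulo p^2 in low degrees: the
   generating function of A(n) is (1 - X)^m Q_(n+1) modulo p^2.  Frobenius
   ((1 - X^d)^p = 1 - X^(dp) mod p) and a first-order binomial expansion rewrite this
   as U(X) * E(X^(p^s)) with deg U < p^s, all coefficients of U congruent to 1 modulo p,
   and E = (1 - X)^u Q_(n+1-s).  The coefficient of X^n of E(X^(p^s)) is read off the
   base-p digits of n: the zero digits between s and t(n) contribute coefficients 1 of
   Q, so A(n) = v * beta(eps_s, eps_t(n)) modulo p^2 with p coprime to v.  Hence
   whether the valuation, known to be 1 or 2, equals 2 only depends on eps_s and
   eps_t(n).  The argument only uses s >= 1. *)

From HB Require Import structures.
From mathcomp Require Import all_boot all_order all_algebra.
From mathcomp Require Import ring zify.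

Set Implicit Arguments.
Unset Strict Implicit.
Unset Printing Implicit Defensive.
Import GRing.Theory.
Local Open Scope ring_scope.

(* [f \in dvdz_upto q N]: q divides the coefficients of f of degree at most N; for
   q = 0 this says that f vanishes up to degree N. *)
Definition dvdz_upto (q : int) (N : nat) (f : {poly int}) : bool :=
  [forall i : 'I_N.+1, (q %| f`_i)%Z].

Lemma dvdz_uptoP q N (f : {poly int}) :
  reflect (forall i, (i <= N)%N -> (q %| f`_i)%Z) (f \in dvdz_upto q N).
Proof.
rewrite unfold_in; apply: (iffP forallP) => [h i le_iN | h i]; last exact: h _ (ltn_ord i).
exact: (h (Ordinal (le_iN : (i < N.+1)%N))).
Qed.

Fact dvdz_upto_zmod_closed q N : zmod_closed (dvdz_upto q N).
Proof.
split=> [|f g /dvdz_uptoP hf /dvdz_uptoP hg]; apply/dvdz_uptoP => i le_iN.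
  by rewrite coef0 dvdz0.
by rewrite coefB rpredB ?hf ?hg.
Qed.

HB.instance Definition _ q N :=
  GRing.isZmodClosed.Build {poly int} (dvdz_upto q N) (dvdz_upto_zmod_closed q N).

Section DvdzUpto.
Variable N : nat.
Implicit Types (q : int) (f g h : {poly int}).

Lemma dvdz_upto_mul q q' f g :
  f \in dvdz_upto q N -> g \in dvdz_upto q' N -> f * g \in dvdz_upto (q * q') N.
Proof.
move=> /dvdz_uptoP hf /dvdz_uptoP hg; apply/dvdz_uptoP => i le_iN.
rewrite coefM rpred_sum // => j _; apply: dvdz_mul.
  by apply: hf; rewrite (leq_trans _ le_iN) // -ltnS.
by apply: hg; rewrite (leq_trans _ le_iN) // leq_subr.
Qed.

Lemma dvdz_uptoMr q f g : f \in dvdz_upto q N -> f * g \in dvdz_upto q N.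
Proof.
by move=> hf; rewrite -[q]mulr1 dvdz_upto_mul //; apply/dvdz_uptoP => i _; apply: dvd1z.
Qed.

Lemma dvdz_uptoMl q f g : g \in dvdz_upto q N -> f * g \in dvdz_upto q N.
Proof. by rewrite mulrC; apply: dvdz_uptoMr. Qed.

Lemma dvdz_upto_trans q q' f :
  (q %| q')%Z -> f \in dvdz_upto q' N -> f \in dvdz_upto q N.
Proof.
by move=> dvd_qq' /dvdz_uptoP hf; apply/dvdz_uptoP => i /hf; apply: dvdz_trans.
Qed.

Lemma dvdz_upto_sub_trans q g f h :
  f - g \in dvdz_upto q N -> g - h \in dvdz_upto q N -> f - h \in dvdz_upto q N.
Proof. by move=> hfg hgh; rewrite -(subrKA g) rpredD. Qed.

Lemma dvdz_upto_natmul q f (n : nat) : (q %| n%:Z)%Z -> f *+ n \in dvdz_upto q N.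
Proof.
move=> dvd_qn; apply/dvdz_uptoP => i _.
by rewrite coefMn -mulr_natr dvdz_mull // natz.
Qed.

Lemma dvdz_upto_comp q f d :
  (0 < d)%N -> f \in dvdz_upto q N -> f \Po 'X^d \in dvdz_upto q N.
Proof.
move=> d_gt0 /dvdz_uptoP hf; apply/dvdz_uptoP => i le_iN.
rewrite coef_comp_poly_Xn //; case: ifP => _; last exact: dvdz0.
by apply: hf; rewrite (leq_trans _ le_iN) // leq_div.
Qed.

Lemma dvdz_upto_Xn q d : (N < d)%N -> 'X^d \in dvdz_upto q N.
Proof.
move=> lt_Nd; apply/dvdz_uptoP => i le_iN.
by rewrite coefXn ltn_eqF ?dvdz0 // (leq_ltn_trans le_iN).
Qed.

Lemma dvdz_upto_subXX q f g n :
  f - g \in dvdz_upto q N -> f ^+ n - g ^+ n \in dvdz_upto q N.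
Proof. by rewrite subrXX; apply: dvdz_uptoMr. Qed.

Lemma dvdz_upto_mul1subX q h : (1 - 'X) * h \in dvdz_upto q N -> h \in dvdz_upto q N.
Proof.
move=> /dvdz_uptoP hX; apply/dvdz_uptoP; elim=> [|i IHi] le_iN.
  by have := hX 0%N le_iN; rewrite mulrBl mul1r coefB coefXM subr0.
have := hX i.+1 le_iN; rewrite mulrBl mul1r coefB coefXM /= => dvd_diff.
by rewrite -(subrK h`_i h`_i.+1) rpredD // IHi // ltnW.
Qed.

Lemma dvdz_upto_prod1 q (I : finType) (F : I -> {poly int}) :
  (forall i, F i - 1 \in dvdz_upto q N) -> \prod_i F i - 1 \in dvdz_upto q N.
Proof.
move=> hF; elim/big_rec: _ => [|i g _ IHg]; first by rewrite subrr rpred0.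
have -> : F i * g - 1 = (F i - 1) * g + (g - 1) by ring.
by rewrite rpredD // dvdz_uptoMr.
Qed.

End DvdzUpto.

Section PrimeCongruences.
Variables (p N : nat).
Hypothesis p_prime : prime p.
Implicit Types (f g h : {poly int}).

Lemma dvdz_upto_exp_prime f g :
  f - g \in dvdz_upto p N -> f ^+ p - g ^+ p \in dvdz_upto (p%:Z * p%:Z) N.
Proof.
move=> dvd_fg; rewrite subrXX dvdz_upto_mul //.
have -> : \sum_(i < p) f ^+ (p.-1 - i) * g ^+ i =
    \sum_(i < p) ((f ^+ (p.-1 - i) - g ^+ (p.-1 - i)) * g ^+ i + g ^+ p.-1).
  apply: eq_bigr => i _.
  by rewrite mulrBl -exprD subnK ?subrK // -ltnS prednK ?prime_gt0.
rewrite big_split sumr_const card_ord rpredD ?dvdz_upto_natmul // rpred_sum // => i _.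
by rewrite dvdz_uptoMr // dvdz_upto_subXX.
Qed.

Lemma dvdz_upto_expD_linear f h m :
  h \in dvdz_upto p N ->
  (f + h) ^+ m - f ^+ m - h * f ^+ m.-1 *+ m \in dvdz_upto (p%:Z * p%:Z) N.
Proof.
move=> dvd_h; elim: m => [|m IHm]; first by rewrite !expr0 mulr0n !subr0 subrr rpred0.
have -> : (f + h) ^+ m.+1 - f ^+ m.+1 - h * f ^+ m *+ m.+1 =
    (f + h) * ((f + h) ^+ m - f ^+ m - h * f ^+ m.-1 *+ m) + h * h * f ^+ m.-1 *+ m.
  case: m {IHm} => [|m]; first by rewrite !expr0 !mulr0n !mulr1n expr1; ring.
  rewrite !exprS /=; ring.
rewrite rpredD ?dvdz_uptoMl // -mulr_natr -!mulrA dvdz_upto_mul //.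
by rewrite dvdz_uptoMr.
Qed.

Lemma dvdz_upto_frobenius f g : (f + g) ^+ p - f ^+ p - g ^+ p \in dvdz_upto p N.
Proof.
have [p' def_p] : exists p', p = p'.+1 by case: p p_prime => // p'; exists p'.
rewrite exprDn def_p big_ord_recr big_ord_recl /= !subnn subn0 bin0 binn.
rewrite !expr0 mul1r mulr1 !mulr1n -def_p.
have cancel_ends (x y z : {poly int}) : x + y + z - x - z = y by ring.
rewrite cancel_ends rpred_sum // => i _; apply: dvdz_upto_natmul.
by rewrite dvdzE prime_dvd_bin // /bump /= add1n def_p ltnS ltn_ord.
Qed.

Hypothesis p_odd : odd p.

Lemma dvdz_upto_frobenius_1subXn d :
  (1 - 'X^d) ^+ p - (1 - 'X^(d * p)) \in dvdz_upto p N.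
Proof.
have -> : 1 - 'X^(d * p) = 1 ^+ p + (- 'X^d) ^+ p :> {poly int}.
  by rewrite expr1n exprNn -signr_odd p_odd mulN1r exprM.
by rewrite opprD addrA; apply: dvdz_upto_frobenius.
Qed.

Lemma dvdz_upto_exp_1subX_expnS s :
  (1 - 'X) ^+ (p ^ s.+1) - (1 - 'X^(p ^ s)) ^+ p \in dvdz_upto (p%:Z * p%:Z) N.
Proof.
elim: s => [|s IHs]; first by rewrite expn1 expn0 subrr rpred0.
rewrite expnSr exprM (dvdz_upto_sub_trans (g := ((1 - 'X^(p ^ s)) ^+ p) ^+ p)) //.
  exact: dvdz_upto_subXX.
by rewrite dvdz_upto_exp_prime // expnSr dvdz_upto_frobenius_1subXn.
Qed.

End PrimeCongruences.

Section PolyFacts.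
Variable R : comNzRingType.
Implicit Types f g : {poly R}.

Lemma coef_mul_comp_Xn f g d n : (0 < d)%N -> (size f <= d)%N ->
  (f * (g \Po 'X^d))`_n = f`_(n %% d) * g`_(n %/ d).
Proof.
move=> d_gt0 size_f; rewrite coefM.
have lt_r_n1 : (n %% d < n.+1)%N by rewrite ltnS leq_mod.
rewrite (bigD1 (Ordinal lt_r_n1)) //= big1 ?addr0 => [|j ne_jr].
  have -> : (n - n %% d = n %/ d * d)%N by rewrite {1}(divn_eq n d) addnK.
  by rewrite coef_comp_poly_Xn // dvdn_mull // mulnK.
rewrite coef_comp_poly_Xn //; case: (ltnP j d) => [lt_jd|le_dj]; last first.
  by rewrite nth_default ?mul0r // (leq_trans size_f).
case: ifP => [dvd_d|]; last by rewrite mulr0.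
case/eqP: ne_jr; apply: val_inj => /=.
have le_jn : (j <= n)%N by rewrite -ltnS.
have : ((n - j + j) %% d = j %% d)%N by rewrite -modnDml (eqP dvd_d).
by rewrite subnK // (modn_small lt_jd) => ->.
Qed.

Lemma coef_mul_comp_Xn_2digits f g d r m : (0 < d)%N -> (size f <= d.*2)%N ->
  (r < d)%N -> (0 < m)%N ->
  (f * (g \Po 'X^d))`_(r + d * m) = f`_r * g`_m + f`_(d + r) * g`_m.-1.
Proof.
move=> d_gt0 size_f lt_rd m_gt0.
have [dm_mod dm_div] : ((r + d * m) %% d = r /\ (r + d * m) %/ d = m)%N.
  by rewrite addnC mulnC modnMDl divnMDl // (modn_small lt_rd) (divn_small lt_rd) addn0.
rewrite -{1}(poly_take_drop d f) mulrDl -mulrA coefD.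
have -> : 'X^d * (g \Po 'X^d) = ('X * g) \Po 'X^d by rewrite comp_polyM comp_polyX.
rewrite !coef_mul_comp_Xn ?size_take_poly ?size_drop_poly ?leq_subLR ?addnn //.
rewrite dm_mod dm_div coef_take_poly coef_drop_poly lt_rd coefXM addnC.
by rewrite gtn_eqF.
Qed.

Lemma size_1subXn d : (size ((1 - 'X^d)%R : {poly R}) <= d.+1)%N.
Proof.
by rewrite (leq_trans (size_polyD _ _)) // size_polyN size_polyXn size_poly1 geq_max leqnn.
Qed.

Lemma size_exp_1subXn d n : (size (((1 - 'X^d) ^+ n)%R : {poly R}) <= (d * n).+1)%N.
Proof.
rewrite (leq_trans (size_poly_exp_leq _ _)) //.
by rewrite ltnS leq_mul2r -subn1 leq_subLR add1n size_1subXn orbT.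
Qed.

Lemma size_exp_1subX n : (size (((1 - 'X) ^+ n)%R : {poly R}) <= n.+1)%N.
Proof. by have := size_exp_1subXn 1 n; rewrite mul1n expr1. Qed.

Definition geom n : {poly R} := \sum_(j < n) 'X^j.

Lemma geom_poly n : geom n = \poly_(j < n) 1.
Proof. by rewrite poly_def; apply: eq_bigr => j _; rewrite scale1r. Qed.

Lemma mul1subX_geom n : (1 - 'X) * geom n = 1 - 'X^n.
Proof.
rewrite -[in RHS](expr1n _ n) subrXX; congr (_ * _).
by apply: eq_bigr => j _; rewrite expr1n mul1r.
Qed.

End PolyFacts.

Arguments size_exp_1subXn {R} d n.
Arguments size_exp_1subX {R} n.
Arguments geom {R} n.

Definition Qprod (p K : nat) : {poly int} := \prod_(i < K) (1 - 'X^(p ^ i)) ^+ (p - 1).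

Lemma QprodSr p K : Qprod p K.+1 = Qprod p K * (1 - 'X^(p ^ K)) ^+ (p - 1).
Proof. by rewrite /Qprod big_ord_recr. Qed.

Lemma QprodD p a K : Qprod p (a + K) = Qprod p a * (Qprod p K \Po 'X^(p ^ a)).
Proof.
rewrite /Qprod big_split_ord rmorph_prod; congr (_ * _); apply: eq_bigr => i _.
by rewrite rmorphXn rmorphB rmorph1 /= comp_Xn_poly -exprM expnD.
Qed.

Lemma QprodS p K : Qprod p K.+1 = (1 - 'X) ^+ (p - 1) * (Qprod p K \Po 'X^p).
Proof. by rewrite -add1n QprodD /Qprod big_ord1 expn0 expn1. Qed.

Lemma size_Qprod p K : (0 < p)%N -> (size (Qprod p K) <= p ^ K)%N.
Proof.
move=> p_gt0; elim: K => [|K IHK]; first by rewrite /Qprod big_ord0 size_poly1.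
rewrite QprodSr (leq_trans (size_polyMleq _ _)) //.
have := size_exp_1subXn (R := int) (p ^ K) (p - 1); rewrite expnSr.
move: IHK; set P := (p ^ K)%N; set a := size _; set b := size _; nia.
Qed.

Definition frob_defect p : {poly int} := (1 - 'X) ^+ (p - 1) - geom p.

Lemma mul1subX_frob_defect p :
  (0 < p)%N -> (1 - 'X) * frob_defect p = (1 - 'X) ^+ p - (1 - 'X^p).
Proof. by move=> p_gt0; rewrite mulrBr mul1subX_geom -exprS subn1 prednK. Qed.

Lemma size_frob_defect p : (0 < p)%N -> (size (frob_defect p) <= p)%N.
Proof.
move=> p_gt0; rewrite (leq_trans (size_polyD _ _)) // size_polyN geq_max.
by rewrite geom_poly size_poly andbT (leq_trans (size_exp_1subX _)) // subn1 prednK.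
Qed.

Definition Upoly p u s : {poly int} :=
  Qprod p s.+1 + (frob_defect p \Po 'X^(p ^ s)) * Qprod p s *+ u.

Lemma size_Upoly p u s : (0 < p)%N -> (size (Upoly p u s) <= p ^ s.+1)%N.
Proof.
move=> p_gt0; rewrite (leq_trans (size_polyD _ _)) // geq_max size_Qprod //=.
rewrite -scaler_nat (leq_trans (size_scale_leq _ _)) //.
rewrite (leq_trans (size_polyMleq _ _)) //.
have := size_comp_poly_leq (frob_defect p) 'X^(p ^ s).
have := size_frob_defect p_gt0; have := size_Qprod s p_gt0.
rewrite size_polyXn expnS /=; set P := (p ^ s)%N; set a := size _; set b := size _.
set c := size _; nia.
Qed.

Section QprodCongruences.
Variables (p N : nat).
Hypotheses (p_prime : prime p) (p_odd : odd p).

Lemma mul1subX_Qprod K : (1 - 'X) * Qprod p K - (1 - 'X^(p ^ K)) \in dvdz_upto p N.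
Proof.
elim: K => [|K IHK]; first by rewrite /Qprod big_ord0 mulr1 expn0 expr1 subrr rpred0.
rewrite QprodSr expnSr; set w := 1 - 'X^(p ^ K).
have w_exp : w ^+ p = w * w ^+ (p - 1) by rewrite -exprS subn1 prednK ?prime_gt0.
have -> : (1 - 'X) * (Qprod p K * w ^+ (p - 1)) - (1 - 'X^(p ^ K * p)) =
    ((1 - 'X) * Qprod p K - w) * w ^+ (p - 1) + (w ^+ p - (1 - 'X^(p ^ K * p))).
  by rewrite w_exp; ring.
by rewrite rpredD ?dvdz_uptoMr ?dvdz_upto_frobenius_1subXn.
Qed.

Lemma Qprod_geom K : Qprod p K - geom (p ^ K) \in dvdz_upto p N.
Proof. by apply: dvdz_upto_mul1subX; rewrite mulrBr mul1subX_geom mul1subX_Qprod. Qed.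

Lemma frob_defect_dvdz : frob_defect p \in dvdz_upto p N.
Proof. by have := Qprod_geom 1; rewrite /Qprod big_ord1 expn0 expn1. Qed.

Lemma Upoly_geom u s : Upoly p u s - geom (p ^ s.+1) \in dvdz_upto p N.
Proof.
rewrite /Upoly addrAC rpredD ?Qprod_geom // rpredMn // dvdz_uptoMr //.
by rewrite dvdz_upto_comp ?expn_gt0 ?prime_gt0 ?frob_defect_dvdz.
Qed.

Lemma exp_1subX_Qprod_congr u s :
  (1 - 'X) ^+ (u * p ^ s.+1) * Qprod p s.+1 - Upoly p u s * (1 - 'X^(p ^ s.+1)) ^+ u
    \in dvdz_upto (p%:Z * p%:Z) N.
Proof.
case: u => [|u]; first by rewrite mul0n /Upoly !expr0 mulr0n addr0 mul1r mulr1 subrr rpred0.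
have p_gt0 := prime_gt0 p_prime.
set w : {poly int} := 'X^(p ^ s); set z : {poly int} := 'X^(p ^ s.+1).
set Yw := frob_defect p \Po w; set h := (1 - w) * Yw.
have dvd_Yw : Yw \in dvdz_upto p N.
  by rewrite dvdz_upto_comp ?expn_gt0 ?p_gt0 ?frob_defect_dvdz.
have dvd_h : h \in dvdz_upto p N by rewrite dvdz_uptoMl.
(* h = 0 mod p, so ((1 - z) + h)^(u+1) is linear in h modulo p^2. *)
have exp_1subw : (1 - w) ^+ p = (1 - z) + h.
  have := congr1 (comp_poly w) (mul1subX_frob_defect p_gt0).
  rewrite comp_polyM -/Yw !(rmorphB, rmorph1, rmorphXn) /= comp_polyX -exprM -expnSr.
  by rewrite -/z -/h => ->; rewrite [RHS]addrC subrK.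
rewrite /Upoly QprodSr -/w.
apply: (dvdz_upto_sub_trans (g := ((1 - w) ^+ p) ^+ u.+1 * (Qprod p s * (1 - w) ^+ (p - 1)))).
  by rewrite -mulrBl dvdz_uptoMr // mulnC exprM dvdz_upto_subXX ?dvdz_upto_exp_1subX_expnS.
rewrite exp_1subw.
apply: (dvdz_upto_sub_trans
  (g := ((1 - z) ^+ u.+1 + h * (1 - z) ^+ u *+ u.+1) * (Qprod p s * (1 - w) ^+ (p - 1)))).
  rewrite -mulrBl dvdz_uptoMr //.
  by have := dvdz_upto_expD_linear (1 - z) u.+1 dvd_h; rewrite opprD addrA.
have -> : ((1 - z) ^+ u.+1 + h * (1 - z) ^+ u *+ u.+1) * (Qprod p s * (1 - w) ^+ (p - 1))
    - (Qprod p s * (1 - w) ^+ (p - 1) + Yw * Qprod p s *+ u.+1) * (1 - z) ^+ u.+1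
    = (Yw * Qprod p s * (1 - z) ^+ u *+ u.+1) * ((1 - w) * (1 - w) ^+ (p - 1) - (1 - z)).
  by rewrite /h !exprS; ring.
rewrite -exprS subn1 prednK // exp_1subw addrAC subrr add0r.
by rewrite dvdz_upto_mul // rpredMn // !dvdz_uptoMr.
Qed.

End QprodCongruences.

Definition neg_binom_trunc (k N : nat) : {poly int} := \poly_(j < N.+1) ('C(j + k - 1, j))%:R.

Lemma geom_truncE m k N i : (0 < k)%N ->
  geom_trunc m k N i = neg_binom_trunc k N \Po 'X^(m ^ i).
Proof.
move=> k_gt0; rewrite /geom_trunc /neg_binom_trunc poly_def linear_sum.
apply: eq_bigr => j _; rewrite linearZ /= comp_Xn_poly -exprM mulnC.
have le_j : (j <= j + k - 1)%N by rewrite -addnBA // leq_addr.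
by rewrite -(bin_sub le_j) -addnBA // addKn.
Qed.

Lemma neg_binom_trunc0 N : neg_binom_trunc 0 N - 1 \in dvdz_upto 0 N.
Proof.
apply/dvdz_uptoP => -[|j] le_jN; rewrite coefB coef1 coef_poly ltnS le_jN.
  by rewrite bin0 subrr dvdz0.
by rewrite addn0 subn1 bin_small // subrr dvdz0.
Qed.

Lemma neg_binom_truncS k N :
  neg_binom_trunc k.+1 N * (1 - 'X) - neg_binom_trunc k N \in dvdz_upto 0 N.
Proof.
apply/dvdz_uptoP => -[|j] le_jN.
  by rewrite mulrBr mulr1 !coefB coefMX !coef_poly /= !bin0 subr0 subrr dvdz0.
rewrite mulrBr mulr1 !coefB coefMX !coef_poly /= !ltnS le_jN ltnW //.
by rewrite addSn addnS !subn1 /= binS natrD addrK subrr dvdz0.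
Qed.

Lemma neg_binom_trunc_mul k N : neg_binom_trunc k N * (1 - 'X) ^+ k - 1 \in dvdz_upto 0 N.
Proof.
elim: k => [|k IHk]; first by rewrite expr0 mulr1 neg_binom_trunc0.
have -> : neg_binom_trunc k.+1 N * (1 - 'X) ^+ k.+1 - 1 =
    (neg_binom_trunc k.+1 N * (1 - 'X) - neg_binom_trunc k N) * (1 - 'X) ^+ k
    + (neg_binom_trunc k N * (1 - 'X) ^+ k - 1).
  by rewrite exprS; ring.
by rewrite rpredD ?dvdz_uptoMr ?neg_binom_truncS.
Qed.

Lemma prod_geom_trunc_mul m k N : (0 < m)%N -> (0 < k)%N ->
  (\prod_(i < N.+1) geom_trunc m k N i) * \prod_(i < N.+1) (1 - 'X^(m ^ i)) ^+ k - 1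
    \in dvdz_upto 0 N.
Proof.
move=> m_gt0 k_gt0; rewrite -big_split /=; apply: dvdz_upto_prod1 => i.
have -> : (1 - 'X^(m ^ i)) ^+ k = (1 - 'X) ^+ k \Po 'X^(m ^ i) :> {poly int}.
  by rewrite rmorphXn rmorphB rmorph1 /= comp_polyX.
rewrite geom_truncE // -rmorphM.
have -> (f : {poly int}) : f \Po 'X^(m ^ i) - 1 = (f - 1) \Po 'X^(m ^ i).
  by rewrite rmorphB rmorph1.
by rewrite dvdz_upto_comp ?expn_gt0 ?m_gt0 ?neg_binom_trunc_mul.
Qed.

Section QprodCoefficients.
Variable p : nat.
Hypotheses (p_prime : prime p) (p_odd : odd p).

Let p_gt0 : (0 < p)%N. Proof. exact: prime_gt0. Qed.

Lemma coef_coprime_geom_congr f m M :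
  f - geom M \in dvdz_upto p m -> (m < M)%N -> coprimez p f`_m.
Proof.
move=> /dvdz_uptoP/(_ m (leqnn m)) dvd_sub lt_mM.
rewrite coefB geom_poly coef_poly lt_mM in dvd_sub.
rewrite coprimezE prime_coprime //; apply/negP => dvd_f.
have : (p %| f`_m - (f`_m - 1))%Z by rewrite rpredB // dvdzE.
by rewrite subKr dvdz1 gtn_eqF // prime_gt1.
Qed.

Lemma coef_QprodS K a b : (a < p)%N ->
  (Qprod p K.+1)`_(a + p * b) = ((1 - 'X) ^+ (p - 1))`_a * (Qprod p K)`_b.
Proof.
move=> lt_ap; rewrite QprodS coef_mul_comp_Xn //; last first.
  by rewrite (leq_trans (size_exp_1subX _)) // subn1 prednK.
by rewrite addnC mulnC modnMDl divnMDl // (modn_small lt_ap) (divn_small lt_ap) addn0.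
Qed.

Lemma coef0_exp_1subX n : ((1 - 'X) ^+ n : {poly int})`_0 = 1.
Proof. by rewrite -horner_coef0 horner_exp !hornerE expr1n. Qed.

Lemma coef_top_exp_1subX : ((1 - 'X) ^+ (p - 1) : {poly int})`_(p - 1) = 1.
Proof.
have -> : (1 - 'X) ^+ (p - 1) = ('X - 1%:P) ^+ (p - 1) :> {poly int}.
  by rewrite -opprB exprNn -signr_odd oddB // p_odd expr0 mul1r polyC1.
have := monic_exp (p - 1) (monicXsubC (1 : int)).
by rewrite monicE lead_coefE size_exp_XsubC => /eqP.
Qed.

Lemma coef_Qprod_expnM t K m : (Qprod p (t + K))`_(p ^ t * m) = (Qprod p K)`_m.
Proof.
elim: t => [|t IHt]; first by rewrite mul1n.
by rewrite addSn expnS -mulnA -[(p * _)%N]add0n coef_QprodS // coef0_exp_1subX mul1r.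
Qed.

Lemma coef_Qprod_expnM_pred t K m : (0 < m)%N ->
  (Qprod p (t + K))`_(p ^ t * m).-1 = (Qprod p K)`_m.-1.
Proof.
move=> m_gt0; elim: t => [|t IHt]; first by rewrite mul1n.
have ptm_gt0 : (0 < p ^ t * m)%N by rewrite muln_gt0 expn_gt0 p_gt0.
have -> : ((p ^ t.+1 * m).-1 = (p - 1) + p * (p ^ t * m).-1)%N.
  by rewrite expnS -mulnA; move: ptm_gt0 p_gt0; set P := (p ^ t * m)%N; nia.
by rewrite addSn coef_QprodS ?coef_top_exp_1subX ?mul1r // subn1 prednK.
Qed.

End QprodCoefficients.

Definition beta (p u d e : nat) : int :=
  ((1 - 'X) ^+ (u + (p - 1)))`_d * ((1 - 'X) ^+ (p - 1))`_e
  + ((1 - 'X) ^+ (u + (p - 1)))`_(p + d) * ((1 - 'X) ^+ (p - 1))`_e.-1.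

Lemma coef_exp_1subX_Qprod_digits p u K t d e Y : prime p -> odd p ->
  (u < p)%N -> (d < p)%N -> (0 < e < p)%N ->
  ((1 - 'X) ^+ u * Qprod p (t + K).+2)`_(d + p * (p ^ t * (e + p * Y)))
    = beta p u d e * (Qprod p K)`_Y.
Proof.
move=> p_prime p_odd lt_up lt_dp /andP[e_gt0 lt_ep]; have p_gt0 := prime_gt0 p_prime.
rewrite QprodS mulrA -exprD coef_mul_comp_Xn_2digits //; last 2 first.
- by rewrite (leq_trans (size_exp_1subX _)) // -addnn; lia.
- by rewrite muln_gt0 expn_gt0 p_gt0 addn_gt0 e_gt0.
rewrite -addnS coef_Qprod_expnM // coef_Qprod_expnM_pred ?addn_gt0 ?e_gt0 //.
have -> : ((e + p * Y).-1 = e.-1 + p * Y)%N by lia.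
rewrite !coef_QprodS ?(leq_ltn_trans (leq_pred e)) //.
by rewrite /beta; ring.
Qed.

Section ProductCongruence.
Variable p : nat.
Hypotheses (p_prime : prime p) (p_odd : odd p).

Lemma prod_geom_trunc_congr u s n : (0 < u)%N ->
  \prod_(i < n.+1) geom_trunc p ((p - 1) * (u * p ^ s.+1 - 1)) n i
    - (1 - 'X) ^+ (u * p ^ s.+1) * Qprod p n.+1 \in dvdz_upto (p%:Z * p%:Z) n.
Proof.
move=> u_gt0; have p_gt1 := prime_gt1 p_prime.
set m := (u * p ^ s.+1)%N; set k := ((p - 1) * (m - 1))%N.
have m_gt1 : (1 < m)%N.
  by rewrite (leq_trans _ (leq_pmull _ u_gt0)) // -{1}(expn0 p) ltn_exp2l.
have k_gt0 : (0 < k)%N by rewrite muln_gt0 !subn_gt0 p_gt1.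
set P := \prod_(i < n.+1) geom_trunc p k n i; set Q := Qprod p n.+1.
set T := (1 - 'X) ^+ m * Q.
pose D : {poly int} := \prod_(i < n.+1) (1 - 'X^(p ^ i)) ^+ k.
have PD_1 : P * D - 1 \in dvdz_upto 0 n := prod_geom_trunc_mul n (prime_gt0 p_prime) k_gt0.
have TD_1 : T * D - 1 \in dvdz_upto (p%:Z * p%:Z) n.
  have -> : T * D = ((1 - 'X) * Q) ^+ m.
    have -> : D = Q ^+ (m - 1).
      by rewrite /D /Q /Qprod -prodrXl; apply: eq_bigr => i _; rewrite exprM.
    by rewrite /T -mulrA -exprS subn1 prednK ?exprMn // ltnW.
  have dvd_1subXQ : (1 - 'X) * Q - 1 \in dvdz_upto p n.
    rewrite -(subrK (1 - 'X^(p ^ n.+1)) ((1 - 'X) * Q)) -addrA rpredD ?mul1subX_Qprod //.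
    rewrite addrAC subrr add0r rpredN dvdz_upto_Xn //.
    by rewrite (ltn_trans (ltn_expl n p_gt1)) ?ltn_exp2l.
  rewrite /m expnS mulnCA exprM -[X in _ - X](expr1n _ (u * p ^ s)) dvdz_upto_subXX //.
  by rewrite -[X in _ - X](expr1n _ p) dvdz_upto_exp_prime.
have -> : P - T = P * - (T * D - 1) + T * (P * D - 1) by ring.
by rewrite rpredD ?dvdz_uptoMl ?rpredN // (dvdz_upto_trans (dvdz0 _) PD_1).
Qed.

Lemma A_congr u s n : (0 < u)%N -> (s < n)%N ->
  (p%:Z * p%:Z %| A p ((p - 1) * (u * p ^ s.+1 - 1)) n
     - (Upoly p u s)`_(n %% p ^ s.+1) * ((1 - 'X) ^+ u * Qprod p (n - s))`_(n %/ p ^ s.+1))%Z.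
Proof.
move=> u_gt0 lt_sn; set z : {poly int} := 'X^(p ^ s.+1).
have pz_gt0 : (0 < p ^ s.+1)%N by rewrite expn_gt0 prime_gt0.
have := exp_1subX_Qprod_congr n p_prime p_odd u s.
move/(dvdz_uptoMr (Qprod p (n - s) \Po z)).
rewrite mulrBl -!mulrA -QprodD addSn subnKC ?(ltnW lt_sn) //.
have -> : (1 - z) ^+ u * (Qprod p (n - s) \Po z) = ((1 - 'X) ^+ u * Qprod p (n - s)) \Po z.
  by rewrite rmorphM rmorphXn rmorphB rmorph1 /= comp_polyX.
move/(dvdz_upto_sub_trans (prod_geom_trunc_congr s n u_gt0))/dvdz_uptoP/(_ n (leqnn n)).
by rewrite coefB coef_mul_comp_Xn // size_Upoly // prime_gt0.
Qed.

End ProductCongruence.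

Lemma divn_expn_digit p i n : (0 < p)%N ->
  (n %/ p ^ i = digit p i n + p * (n %/ p ^ i.+1))%N.
Proof.
by move=> p_gt0; rewrite /digit {1}(divn_eq (n %/ p ^ i) p) addnC mulnC -divnMA -expnSr.
Qed.

Lemma divn_expn_zero_digits p i j n : (0 < p)%N ->
  (forall l, (i <= l < i + j)%N -> digit p l n = 0%N) ->
  (n %/ p ^ i = p ^ j * (n %/ p ^ (i + j)))%N.
Proof.
move=> p_gt0; elim: j => [|j IHj] zero; first by rewrite expn0 mul1n addn0.
rewrite IHj => [|l /andP[le_il lt_l]]; last by rewrite zero // le_il addnS ltnW.
rewrite (divn_expn_digit (i + j)) // zero ?leq_addr ?addnS ?ltnSn // add0n.
by rewrite mulnA -expnSr.
Qed.

Lemma divn_expn_is_tn p s n t : (0 < p)%N -> is_tn p s n t ->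
  (n %/ p ^ s = digit p s n + p * (p ^ (t - s.+1) * (digit p t n + p * (n %/ p ^ t.+1))))%N.
Proof.
move=> p_gt0 [lt_st _ zero]; rewrite (divn_expn_digit s) //.
by rewrite (divn_expn_zero_digits (j := t - s.+1)) // subnKC // -divn_expn_digit.
Qed.

Lemma nu_eq12 p a : prime p -> nu p a \in [:: 1; 2]%N ->
  nu p a = (if (p%:Z * p%:Z %| a)%Z then 2 else 1)%N.
Proof.
move=> p_prime nu12; have a_gt0 : (0 < `|a|)%N.
  by move: nu12; rewrite /nu lt0n; case: eqP => // ->; rewrite logn0.
rewrite dvdzE abszM mulnn pfactor_dvdn //.
by move: nu12; rewrite /nu !inE => /orP[] /eqP ->.
Qed.

Lemma dvdz_sub_mul_coprime (d a v b : int) :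
  (d %| a - v * b)%Z -> coprimez d v -> (d %| a)%Z = (d %| b)%Z.
Proof.
move=> dvd_sub cop_dv.
by rewrite -(Gauss_dvdzr b cop_dv) -(subrK (v * b) a) rpredDl.
Qed.

Lemma A_congr_beta p u s n t : prime p -> odd p -> (0 < u < p)%N ->
  (p ^ s.+2 <= n)%N -> is_tn p s.+1 n t ->
  exists2 v : int, coprimez p v &
    (p%:Z * p%:Z %| A p ((p - 1) * (u * p ^ s.+1 - 1)) n
       - v * beta p u (digit p s.+1 n) (digit p t n))%Z.
Proof.
move=> p_prime p_odd /andP[u_gt0 lt_up] le_n tn; have [lt_st digit_t _] := tn.
have p_gt1 := prime_gt1 p_prime; have p_gt0 := ltnW p_gt1.
have lt_tn : (t < n)%N.
  have : (0 < n %/ p ^ t)%N.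
    by move: digit_t; rewrite /digit !lt0n; apply: contra_neq => ->; apply: mod0n.
  by rewrite divn_gt0 ?expn_gt0 ?p_gt0 //; apply: leq_trans (ltn_expl t p_gt1).
set Y := (n %/ p ^ t.+1)%N.
exists ((Upoly p u s)`_(n %% p ^ s.+1) * (Qprod p (n - t))`_Y).
  rewrite coprimezMr (coef_coprime_geom_congr p_prime (Upoly_geom _ p_prime p_odd u s)).
    rewrite (coef_coprime_geom_congr p_prime (Qprod_geom _ p_prime p_odd _)) //.
    rewrite ltn_divLR ?expn_gt0 ?p_gt0 // -expnD addnS subnK ?(ltnW lt_tn) //.
    exact: ltnW (ltn_expl n.+1 p_gt1).
  by rewrite ltn_pmod ?expn_gt0 ?p_gt0.
have lt_digit i : (digit p i n < p)%N by rewrite ltn_pmod.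
have lt_sn : (s < n)%N by lia.
have := A_congr p_prime p_odd u_gt0 lt_sn.
rewrite (divn_expn_is_tn p_gt0 tn) -/Y.
have -> : (n - s = (t - s.+2 + (n - t)).+2)%N by lia.
rewrite coef_exp_1subX_Qprod_digits ?lt_digit ?lt0n ?digit_t //.
by rewrite [beta _ _ _ _ * _]mulrC mulrA.
Qed.

Theorem theorem3p1 (p u s : nat) :
  prime p -> (3 <= p)%N -> (1 <= u <= p - 1)%N -> (2 <= s)%N ->
  forall n n' t t' : nat,
    (p ^ s.+1 <= n)%N -> (p ^ s.+1 <= n')%N ->
    is_tn p s n t -> is_tn p s n' t' ->
    let k := ((p - 1) * (u * p ^ s - 1))%N in
    nu p (A p k n) \in [:: 1; 2]%N ->
    nu p (A p k n') \in [:: 1; 2]%N ->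
    digit p s n = digit p s n' ->
    digit p t n = digit p t' n' ->
    nu p (A p k n) = nu p (A p k n').
Proof.
move=> p_prime p_ge3 /andP[u_gt0 le_up] s_ge2 n n' t t' le_n le_n' tn tn' k.
move=> nu12 nu12' eq_ds eq_dt; subst k.
have p_odd : odd p by case: (even_prime p_prime) p_ge3 => [->|].
have u_range : (0 < u < p)%N by rewrite u_gt0 /=; lia.
case: s s_ge2 le_n le_n' tn tn' eq_ds nu12 nu12' => [//|s] _ le_n le_n' tn tn' eq_ds nu12 nu12'.
have [v cop_v dvd_A] := A_congr_beta p_prime p_odd u_range le_n tn.
have [v' cop_v' dvd_A'] := A_congr_beta p_prime p_odd u_range le_n' tn'.
have cop_p2 w : coprimez p w -> coprimez (p%:Z * p%:Z) w by rewrite coprimezMl => ->.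
rewrite (nu_eq12 p_prime nu12) (nu_eq12 p_prime nu12').
by rewrite (dvdz_sub_mul_coprime dvd_A) ?(dvdz_sub_mul_coprime dvd_A') ?cop_p2 ?eq_ds ?eq_dt.
Qed.
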